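(* Let $$E=\begin{bmatrix} J_{k,a} & -J_{k,b} & J_{k,c} & -J_{k,d} & 0 & 0 \\ -J_{l,a} & J_{l,b} & -J_{l,c} & J_{l,d} & 0 & 0 \\ J_{p,a} & -J_{p,b} & 0 & 0 & J_{p,e} & -J_{p,f} \\ -J_{q,a} & J_{q,b} & 0 & 0 & -J_{q,e} & J_{q,f} \\ 0 & 0 & J_{r,c} & -J_{r,d} & -J_{r,e} & J_{r,f} \\ 0 & 0 & -J_{s,c} & J_{s,d} & J_{s,e} & -J_{s,f} \\ \end{bmatrix}$$ where $E\mathbf{1}=0$, $\mathbf{1}^TE=0^T$, and $a+b$, $c+d$, $e+f$, $k+l$, $p+q$ and $r+s$ are positive. Let \begin{align*} A=\begin{bmatrix} 0 & J_{k,b} & 0 & J_{k,d} & X_{11} & X_{12} \\ J_{l,a} & 0 & J_{l,c} & 0 & X_{21} & X_{22} \\ 0 & J_{p,b} & Y_{11} & Y_{12} & 0 & J_{p,f} \\ J_{q,a} & 0 & Y_{21} & Y_{22} & J_{q,e} & 0 \\ Z_{11} & Z_{12} & 0 & J_{r,d} & J_{r,e} & 0 \\ Z_{21} & Z_{22} & J_{s,c} & 0 & 0 & J_{s,f} \\ \end{bmatrix} \end{align*} be a $(0,1)$ matrix conformally partitioned with $E$. Suppose that $X=\begin{bmatrix} X_{11} & X_{12}\\ X_{21} & X_{22} \end{bmatrix}$, $Y=\begin{bmatrix} Y_{11} & Y_{12}\\ Y_{21} & Y_{22} \end{bmatrix}$ and $Z=\begin{bmatrix} Z_{11} & Z_{12}\\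 Z_{21} & Z_{22} \end{bmatrix}$. Then, $A$ and $A+E$ are Gram mates if and only if $X$, $Y$ and $Z$ satisfy the following conditions: \begin{enumerate} \item there are integers $x_1,x_2,y_1,y_2,z_1$ and $z_2$ such that $X\begin{bmatrix} \mathbf{1}\\ -\mathbf{1} \end{bmatrix}=\begin{bmatrix} x_1\mathbf{1}\\ x_2\mathbf{1} \end{bmatrix}$, $Y\begin{bmatrix} \mathbf{1}\\ -\mathbf{1} \end{bmatrix}=\begin{bmatrix} y_1\mathbf{1}\\ y_2\mathbf{1} \end{bmatrix}$, $Z\begin{bmatrix} \mathbf{1}\\ -\mathbf{1} \end{bmatrix}=\begin{bmatrix} z_1\mathbf{1}\\ z_2\mathbf{1} \end{bmatrix}$ and $x_1=y_2=-z_2$, $x_2=y_1=-z_1$, $x_1+x_2=y_1+y_2=-(z_1+z_2)=e-f$; and \item there are integers $\alpha_1,\alpha_2,\beta_1,\beta_2,\gamma_1$ and $\gamma_2$ such that $X^T\begin{bmatrix} \mathbf{1}\\ -\mathbf{1} \end{bmatrix}=\begin{bmatrix} \alpha_1\mathbf{1}\\ \alpha_2\mathbf{1} \end{bmatrix}$, $Y^T\begin{bmatrix} \mathbf{1}\\ -\mathbf{1} \end{bmatrix}=\begin{bmatrix} \beta_1\mathbf{1}\\ \beta_2\mathbf{1} \end{bmatrix}$, $Z^T\begin{bmatrix} \mathbf{1}\\ -\mathbf{1} \end{bmatrix}=\begin{bmatrix} \gamma_1\mathbf{1}\\ \gamma_2\mathbf{1} \end{bmatrix}$ and $\gamma_1=\beta_2=-\alpha_2$,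 $\gamma_2=\beta_1=-\alpha_1$, $\gamma_1+\gamma_2=\beta_1+\beta_2=-(\alpha_1+\alpha_2)=l-k$. \end{enumerate} In particular, conditions 1 and 2 imply $e\alpha_1-f\alpha_2=kx_1-lx_2$, $c\beta_1-d\beta_2=py_1-qy_2$, and $a\gamma_1-b\gamma_2=rz_1-sz_2$.
   Context: $J_{p,q}$ denotes the $p\times q$ all-ones matrix (absent if $p=0$ or $q=0$) and $\mathbf{1}$ an all-ones column vector of appropriate size. Two $(0,1)$ matrices $A\neq B$ are Gram mates if $AA^T=BB^T$ and $A^TA=B^TB$. *)

From mathcomp Require Import all_boot all_order all_algebra.
Set Implicit Arguments. Unset Strict Implicit. Unset Printing Implicit Defensive.
Import Order.TTheory GRing.Theory Num.Theory.
Local Open Scope ring_scope.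

Definition J (p q : nat) : 'M[int]_(p, q) := const_mx 1.
Definition ones (n : nat) : 'cV[int]_n := const_mx 1.
Definition cst (n : nat) (x : int) : 'cV[int]_n := const_mx x.

Definition is01 (m n : nat) (A : 'M[int]_(m, n)) : Prop :=
  forall i j, A i j = 0 \/ A i j = 1.

Definition gram_mates (m n : nat) (A B : 'M[int]_(m, n)) : Prop :=
  [/\ is01 A, is01 B, A <> B,
      A *m A^T = B *m B^T & A^T *m A = B^T *m B].

Definition row6 (m n1 n2 n3 n4 n5 n6 : nat)
  (B1 : 'M[int]_(m, n1)) (B2 : 'M[int]_(m, n2)) (B3 : 'M[int]_(m, n3))
  (B4 : 'M[int]_(m, n4)) (B5 : 'M[int]_(m, n5)) (B6 : 'M[int]_(m, n6))
  : 'M[int]_(m, n1 + (n2 + (n3 + (n4 + (n5 + n6))))) :=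
  row_mx B1 (row_mx B2 (row_mx B3 (row_mx B4 (row_mx B5 B6)))).

Definition col6 (n m1 m2 m3 m4 m5 m6 : nat)
  (B1 : 'M[int]_(m1, n)) (B2 : 'M[int]_(m2, n)) (B3 : 'M[int]_(m3, n))
  (B4 : 'M[int]_(m4, n)) (B5 : 'M[int]_(m5, n)) (B6 : 'M[int]_(m6, n))
  : 'M[int]_(m1 + (m2 + (m3 + (m4 + (m5 + m6)))), n) :=
  col_mx B1 (col_mx B2 (col_mx B3 (col_mx B4 (col_mx B5 B6)))).

Definition Emx (k l p q r s a b c d e f : nat) :=
  col6
    (row6 (J k a) (- J k b) (J k c) (- J k d) (0 : 'M_(k, e)) (0 : 'M_(k, f)))
    (row6 (- J l a) (J l b) (- J l c) (J l d) (0 : 'M_(l, e)) (0 : 'M_(l, f)))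
    (row6 (J p a) (- J p b) (0 : 'M_(p, c)) (0 : 'M_(p, d)) (J p e) (- J p f))
    (row6 (- J q a) (J q b) (0 : 'M_(q, c)) (0 : 'M_(q, d)) (- J q e) (J q f))
    (row6 (0 : 'M_(r, a)) (0 : 'M_(r, b)) (J r c) (- J r d) (- J r e) (J r f))
    (row6 (0 : 'M_(s, a)) (0 : 'M_(s, b)) (- J s c) (J s d) (J s e) (- J s f)).

Definition Amx (k l p q r s a b c d e f : nat)
  (X11 : 'M[int]_(k, e)) (X12 : 'M[int]_(k, f))
  (X21 : 'M[int]_(l, e)) (X22 : 'M[int]_(l, f))
  (Y11 : 'M[int]_(p, c)) (Y12 : 'M[int]_(p, d))
  (Y21 : 'M[int]_(q, c)) (Y22 : 'M[int]_(q, d))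
  (Z11 : 'M[int]_(r, a)) (Z12 : 'M[int]_(r, b))
  (Z21 : 'M[int]_(s, a)) (Z22 : 'M[int]_(s, b)) :=
  col6
    (row6 (0 : 'M_(k, a)) (J k b) (0 : 'M_(k, c)) (J k d) X11 X12)
    (row6 (J l a) (0 : 'M_(l, b)) (J l c) (0 : 'M_(l, d)) X21 X22)
    (row6 (0 : 'M_(p, a)) (J p b) Y11 Y12 (0 : 'M_(p, e)) (J p f))
    (row6 (J q a) (0 : 'M_(q, b)) Y21 Y22 (J q e) (0 : 'M_(q, f)))
    (row6 Z11 Z12 (0 : 'M_(r, c)) (J r d) (J r e) (0 : 'M_(r, f)))
    (row6 Z21 Z22 (J s c) (0 : 'M_(s, d)) (0 : 'M_(s, e)) (J s f)).

Definition cond1_with (k l p q r s a b c d e f : nat)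
  (X : 'M[int]_(k + l, e + f)) (Y : 'M[int]_(p + q, c + d))
  (Z : 'M[int]_(r + s, a + b)) (x1 x2 y1 y2 z1 z2 : int) : Prop :=
  [/\ X *m col_mx (ones e) (- ones f) = col_mx (cst k x1) (cst l x2),
      Y *m col_mx (ones c) (- ones d) = col_mx (cst p y1) (cst q y2),
      Z *m col_mx (ones a) (- ones b) = col_mx (cst r z1) (cst s z2),
      (x1 = y2 /\ y2 = - z2) /\ (x2 = y1 /\ y1 = - z1) &
      [/\ x1 + x2 = y1 + y2, y1 + y2 = - (z1 + z2)
        & - (z1 + z2) = e%:Z - f%:Z]].

Definition cond2_with (k l p q r s a b c d e f : nat)
  (X : 'M[int]_(k + l, e + f)) (Y : 'M[int]_(p + q, c + d))
  (Z : 'M[int]_(r + s, a + b)) (al1 al2 be1 be2 ga1 ga2 : int) : Prop :=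
  [/\ X^T *m col_mx (ones k) (- ones l) = col_mx (cst e al1) (cst f al2),
      Y^T *m col_mx (ones p) (- ones q) = col_mx (cst c be1) (cst d be2),
      Z^T *m col_mx (ones r) (- ones s) = col_mx (cst a ga1) (cst b ga2),
      (ga1 = be2 /\ be2 = - al2) /\ (ga2 = be1 /\ be1 = - al1) &
      [/\ ga1 + ga2 = be1 + be2, be1 + be2 = - (al1 + al2)
        & - (al1 + al2) = l%:Z - k%:Z]].

(* With D := A E^T + E A^T + E E^T, the rows of A and A + E have the same Gram matrix iff
   D = 0.  The row blocks fall into three levels, (k,l), (p,q) and (r,s); on each row block the
   rows of A and E are explicit up to the rows of X, Y and Z, so D_ij only depends on the blocks
   of i and j and on the signed row sums of X, Y, Z in rows i and j.  The balance conditions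
   coming from E 1 = 0 make D_ij vanish when i and j lie in the same level; otherwise D_ij = 0
   iff a suitably normalised signed row sum takes the same value at i and at j.  Two levels are
   nonempty, so D = 0 iff that weight is constant, which is condition 1.  A^T and E^T have the
   same shape as A and E with the roles of X and Z exchanged, so the column Gram condition is
   condition 2.  The final identities evaluate u^T M v in two ways, u and v being +-1 vectors. *)

From mathcomp Require Import all_boot all_order all_algebra.
From mathcomp Require Import zify.
Set Implicit Arguments. Unset Strict Implicit. Unset Printing Implicit Defensive.
Import GRing.Theory.
Local Open Scope ring_scope.

Variant block6_spec (n1 n2 n3 n4 n5 n6 : nat) :
    'I_(n1 + (n2 + (n3 + (n4 + (n5 + n6))))) -> Type :=
  | Block1 (i : 'I_n1) : block6_spec (lshift _ i)
  | Block2 (i : 'I_n2) : block6_spec (rshift n1 (lshift _ i))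
  | Block3 (i : 'I_n3) : block6_spec (rshift n1 (rshift n2 (lshift _ i)))
  | Block4 (i : 'I_n4) : block6_spec (rshift n1 (rshift n2 (rshift n3 (lshift _ i))))
  | Block5 (i : 'I_n5) :
      block6_spec (rshift n1 (rshift n2 (rshift n3 (rshift n4 (lshift _ i)))))
  | Block6 (i : 'I_n6) :
      block6_spec (rshift n1 (rshift n2 (rshift n3 (rshift n4 (rshift n5 i))))).

Lemma block6P n1 n2 n3 n4 n5 n6 (i : 'I_(n1 + (n2 + (n3 + (n4 + (n5 + n6)))))) :
  block6_spec i.
Proof.
case: (split_ordP i) => [i1 ->|{}i ->]; first exact: Block1.
case: (split_ordP i) => [i2 ->|{}i ->]; first exact: Block2.
case: (split_ordP i) => [i3 ->|{}i ->]; first exact: Block3.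
case: (split_ordP i) => [i4 ->|{}i ->]; first exact: Block4.
by case: (split_ordP i) => [i5 ->|i6 ->]; [exact: Block5 | exact: Block6].
Qed.

Lemma nonempty_pair_case n1 n2 (P : Prop) :
  (0 < n1 + n2)%N -> (forall i : 'I_n1, P) -> (forall i : 'I_n2, P) -> P.
Proof.
case: n1 => [|n1] /= n2_gt0 P1 P2; last exact: P1 ord0.
by case: n2 n2_gt0 P2 => // n2 _ P2; exact: P2 ord0.
Qed.

Lemma same_level_or_eq_const (I T U : Type) (level : I -> T) (w : I -> U) i0 i1 :
  level i0 <> level i1 ->
  (forall i j, level i = level j \/ w i = w j) <-> exists t, forall i, w i = t.
Proof.
move=> neq01; split=> [lw | [t wt] i j]; last by right; rewrite !wt.
exists (w i0) => i; have w10 : w i1 = w i0 by case: (lw i1 i0) => // /esym.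
case: (lw i i0) => [li0 | //]; case: (lw i i1) => [li1 | ->//].
by case: neq01; rewrite -li0 -li1.
Qed.

Lemma row_mx_col_mx (T : Type) m1 m2 n1 n2
    (A1 : 'M[T]_(m1, n1)) (A2 : 'M[T]_(m2, n1)) (A3 : 'M[T]_(m1, n2)) (A4 : 'M[T]_(m2, n2)) :
  row_mx (col_mx A1 A2) (col_mx A3 A4) = col_mx (row_mx A1 A3) (row_mx A2 A4).
Proof. exact: (esym (block_mxEh _ _ _ _)). Qed.

Lemma col_mx_eq_const (T : Type) m1 m2 n (C1 : 'M[T]_(m1, n)) (C2 : 'M[T]_(m2, n)) x :
  col_mx C1 C2 = const_mx x <-> C1 = const_mx x /\ C2 = const_mx x.
Proof. by rewrite -col_mx_const; split=> [/eq_col_mx | [-> ->]]. Qed.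

Lemma oppmx_const (V : zmodType) m n (x : V) :
  - const_mx x = const_mx (- x) :> 'M_(m, n).
Proof. by apply/matrixP => i j; rewrite !mxE. Qed.

Lemma mul_const_mx (R : pzRingType) m n p (x y : R) :
  (const_mx x : 'M_(m, n)) *m (const_mx y : 'M_(n, p)) = const_mx (x * y *+ n).
Proof.
apply/matrixP => i j; rewrite !mxE (eq_bigr (fun _ => x * y)) ?sumr_const ?card_ord //.
by move=> t _; rewrite !mxE.
Qed.

Definition dot (R : pzRingType) n (u v : 'rV[R]_n) : R := (u *m v^T) 0 0.

Lemma mul_tr_dot (R : pzRingType) m n p (A : 'M[R]_(m, n)) (B : 'M[R]_(p, n)) i j :
  (A *m B^T) i j = dot (row i A) (row j B).
Proof. by rewrite /dot !mxE; apply: eq_bigr => t _; rewrite !mxE. Qed.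

Lemma dot0l (R : pzRingType) n (v : 'rV[R]_n) : dot 0 v = 0.
Proof. by rewrite /dot mul0mx mxE. Qed.

Lemma dot0r (R : pzRingType) n (u : 'rV[R]_n) : dot u 0 = 0.
Proof. by rewrite /dot trmx0 mulmx0 mxE. Qed.

Lemma dot_const (R : pzRingType) n (x y : R) :
  dot (const_mx x : 'rV_n) (const_mx y) = x * y *+ n.
Proof. by rewrite /dot trmx_const mul_const_mx mxE. Qed.

Definition gram_defect (R : pzRingType) m n (A E : 'M[R]_(m, n)) :=
  A *m E^T + E *m A^T + E *m E^T.

Lemma gram_defectE (R : pzRingType) m n (A E : 'M[R]_(m, n)) i j :
  gram_defect A E i j =
  dot (row i A) (row j E) + dot (row i E) (row j A) + dot (row i E) (row j E).
Proof. by rewrite /gram_defect mxE [(A *m _ + _) i j]mxE !mul_tr_dot. Qed.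

Lemma gram_rows_addE (R : pzRingType) m n (A E : 'M[R]_(m, n)) :
  A *m A^T = (A + E) *m (A + E)^T <-> forall i j, gram_defect A E i j = 0.
Proof.
have -> : (A + E) *m (A + E)^T = A *m A^T + gram_defect A E.
  by rewrite /gram_defect linearD /= mulmxDl !mulmxDr !addrA.
split=> [AAE i j | D0].
  have -> : gram_defect A E = 0 by apply: (addrI (A *m A^T)); rewrite addr0 -AAE.
  by rewrite mxE.
have -> : gram_defect A E = 0 by apply/matrixP => i j; rewrite D0 mxE.
by rewrite addr0.
Qed.

Lemma gram_mates_addE m n (A E : 'M[int]_(m, n)) :
  is01 A -> is01 (A + E) -> E <> 0 ->
  gram_mates A (A + E) <->
  A *m A^T = (A + E) *m (A + E)^T /\ A^T *m A = (A + E)^T *m (A + E).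
Proof.
move=> A01 AE01 E_neq0; split=> [[_ _ _ -> ->] // | [AAr AAc]].
by split=> // AAE; apply: E_neq0; apply: (addrI A); rewrite addr0 -AAE.
Qed.

Lemma row_row6 m n1 n2 n3 n4 n5 n6 (i : 'I_m)
    (B1 : 'M[int]_(m, n1)) (B2 : 'M[int]_(m, n2)) (B3 : 'M[int]_(m, n3))
    (B4 : 'M[int]_(m, n4)) (B5 : 'M[int]_(m, n5)) (B6 : 'M[int]_(m, n6)) :
  row i (row6 B1 B2 B3 B4 B5 B6) =
  row6 (row i B1) (row i B2) (row i B3) (row i B4) (row i B5) (row i B6).
Proof. by rewrite /row6 !row_row_mx. Qed.

Lemma const_row6 m n1 n2 n3 n4 n5 n6 (x : int) :
  const_mx x = row6 (const_mx x : 'M_(m, n1)) (const_mx x : 'M_(m, n2))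
    (const_mx x : 'M_(m, n3)) (const_mx x : 'M_(m, n4))
    (const_mx x : 'M_(m, n5)) (const_mx x : 'M_(m, n6)).
Proof. by rewrite /row6 !row_mx_const. Qed.

Lemma dot_row6 n1 n2 n3 n4 n5 n6
    (u1 v1 : 'rV[int]_n1) (u2 v2 : 'rV[int]_n2) (u3 v3 : 'rV[int]_n3)
    (u4 v4 : 'rV[int]_n4) (u5 v5 : 'rV[int]_n5) (u6 v6 : 'rV[int]_n6) :
  dot (row6 u1 u2 u3 u4 u5 u6) (row6 v1 v2 v3 v4 v5 v6) =
  dot u1 v1 + dot u2 v2 + dot u3 v3 + dot u4 v4 + dot u5 v5 + dot u6 v6.
Proof. by rewrite /dot /row6 !tr_row_mx !mul_row_col !mxE !addrA. Qed.

Definition rsum m n (M : 'M[int]_(m, n)) (i : 'I_m) : int := (M *m ones n) i 0.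

Lemma dot_row_const m n (M : 'M[int]_(m, n)) i (y : int) :
  dot (row i M) (const_mx y) = rsum M i * y.
Proof.
by rewrite /dot /rsum !mxE mulr_suml; apply: eq_bigr => t _; rewrite !mxE mulr1.
Qed.

Lemma dot_const_row m n (M : 'M[int]_(m, n)) i (x : int) :
  dot (const_mx x) (row i M) = x * rsum M i.
Proof.
by rewrite /dot /rsum !mxE mulr_sumr; apply: eq_bigr => t _; rewrite !mxE mulr1 mulrC.
Qed.

Definition signed_rsum m n1 n2 (M1 : 'M[int]_(m, n1)) (M2 : 'M[int]_(m, n2)) : 'cV[int]_m :=
  \col_i (rsum M1 i - rsum M2 i).

Lemma mul_block_signs m1 m2 n1 n2 (M11 : 'M[int]_(m1, n1)) (M12 : 'M[int]_(m1, n2))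
    (M21 : 'M[int]_(m2, n1)) (M22 : 'M[int]_(m2, n2)) :
  block_mx M11 M12 M21 M22 *m col_mx (ones n1) (- ones n2) =
  col_mx (signed_rsum M11 M12) (signed_rsum M21 M22).
Proof.
rewrite mul_block_col !mulmxN; congr col_mx; apply/matrixP => i j;
  by rewrite (ord1 j) /signed_rsum /rsum !mxE.
Qed.

Lemma signed_rsum_duality m1 m2 n1 n2 (M : 'M[int]_(m1 + m2, n1 + n2)) x1 x2 y1 y2 :
  M *m col_mx (ones n1) (- ones n2) = col_mx (cst m1 x1) (cst m2 x2) ->
  M^T *m col_mx (ones m1) (- ones m2) = col_mx (cst n1 y1) (cst n2 y2) ->
  n1%:Z * y1 - n2%:Z * y2 = m1%:Z * x1 - m2%:Z * x2.
Proof.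
move=> Mx MTy.
have := congr1 (fun N : 'M_1 => N 0 0)
  (mulmxA (col_mx (ones m1) (- ones m2))^T M (col_mx (ones n1) (- ones n2))).
rewrite Mx -[_^T *m M]trmxK trmx_mul trmxK MTy /ones /cst !oppmx_const !tr_col_mx
  !trmx_const !mul_row_col !mul_const_mx !mxE.
lia.
Qed.

Lemma trmx_Emx k l p q r s a b c d e f :
  (Emx k l p q r s a b c d e f)^T = Emx a b c d e f k l p q r s.
Proof.
by rewrite /Emx /col6 /row6 !tr_col_mx !tr_row_mx !row_mx_col_mx /J !oppmx_const
  !trmx_const ?trmx0.
Qed.

Lemma trmx_Amx k l p q r s a b c d e f
    (X11 : 'M[int]_(k, e)) (X12 : 'M[int]_(k, f))
    (X21 : 'M[int]_(l, e)) (X22 : 'M[int]_(l, f))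
    (Y11 : 'M[int]_(p, c)) (Y12 : 'M[int]_(p, d))
    (Y21 : 'M[int]_(q, c)) (Y22 : 'M[int]_(q, d))
    (Z11 : 'M[int]_(r, a)) (Z12 : 'M[int]_(r, b))
    (Z21 : 'M[int]_(s, a)) (Z22 : 'M[int]_(s, b)) :
  (Amx X11 X12 X21 X22 Y11 Y12 Y21 Y22 Z11 Z12 Z21 Z22)^T =
  Amx Z11^T Z21^T Z12^T Z22^T Y11^T Y21^T Y12^T Y22^T X11^T X21^T X12^T X22^T.
Proof.
by rewrite /Amx /col6 /row6 !tr_col_mx !tr_row_mx !row_mx_col_mx /J !trmx_const ?trmx0.
Qed.

Section GramRows.
Variables (k l p q r s a b c d e f : nat).
Variables (X11 : 'M[int]_(k, e)) (X12 : 'M[int]_(k, f))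
  (X21 : 'M[int]_(l, e)) (X22 : 'M[int]_(l, f))
  (Y11 : 'M[int]_(p, c)) (Y12 : 'M[int]_(p, d))
  (Y21 : 'M[int]_(q, c)) (Y22 : 'M[int]_(q, d))
  (Z11 : 'M[int]_(r, a)) (Z12 : 'M[int]_(r, b))
  (Z21 : 'M[int]_(s, a)) (Z22 : 'M[int]_(s, b)).
(* A and E are kept abstract behind their defining equations, so that rewriting the rows of
   one of them never attempts a (very costly) unification with the other. *)
Variables A E : 'M[int]_(k + (l + (p + (q + (r + s)))), a + (b + (c + (d + (e + f))))).
Hypothesis A_def : A = Amx X11 X12 X21 X22 Y11 Y12 Y21 Y22 Z11 Z12 Z21 Z22.
Hypothesis E_def : E = Emx k l p q r s a b c d e f.

Lemma Emx_row_balance :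
  E *m ones _ = 0 -> (0 < k + l)%N -> (0 < p + q)%N -> (0 < r + s)%N ->
  [/\ a%:Z - b%:Z + c%:Z - d%:Z = 0, a%:Z - b%:Z + e%:Z - f%:Z = 0
    & c%:Z - d%:Z - e%:Z + f%:Z = 0].
Proof.
move=> E1 hkl hpq hrs.
have rsE i : dot (row i E) (const_mx 1) = 0 by rewrite dot_row_const /rsum E1 mxE.
split; [apply: (nonempty_pair_case hkl) | apply: (nonempty_pair_case hpq)
       | apply: (nonempty_pair_case hrs)] => i;
  [move: (rsE (lshift _ i)) | move: (rsE (rshift k (lshift _ i)))
  | move: (rsE (rshift k (rshift l (lshift _ i))))
  | move: (rsE (rshift k (rshift l (rshift p (lshift _ i)))))
  | move: (rsE (rshift k (rshift l (rshift p (rshift q (lshift _ i))))))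
  | move: (rsE (rshift k (rshift l (rshift p (rshift q (rshift r i))))))];
  rewrite E_def /Emx /J !oppmx_const /col6 ?(rowKu, rowKd) row_row6 ?(row0, row_const)
    const_row6 dot_row6 ?dot0l ?dot_const; lia.
Qed.

Lemma Emx_neq0 : (0 < k + l)%N -> (0 < a + b)%N -> E <> 0.
Proof.
move=> hkl hab E0.
have nrm0 i : dot (row i E) (row i E) = 0 by rewrite E0 row0 dot0l.
apply: (nonempty_pair_case hkl) => i;
  [move: (nrm0 (lshift _ i)) | move: (nrm0 (rshift k (lshift _ i)))];
  rewrite E_def /Emx /J !oppmx_const /col6 ?(rowKu, rowKd) row_row6 ?(row0, row_const)
    dot_row6 ?dot0l ?dot_const; lia.
Qed.

Lemma is01_Amx_add_Emx : is01 A -> is01 (A + E).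
Proof.
move=> A01 i j; move: (A01 i j); rewrite mxE.
case: (block6P i) => i0; case: (block6P j) => j0;
  rewrite A_def /Amx /col6 /row6 ?(col_mxEu, col_mxEd, row_mxEl, row_mxEr);
  rewrite E_def /Emx /col6 /row6 ?(col_mxEu, col_mxEd, row_mxEl, row_mxEr) /J !mxE; lia.
Qed.

Definition block_level : 'cV[int]_(k + (l + (p + (q + (r + s))))) :=
  col6 (cst k 0) (cst l 0) (cst p 1) (cst q 1) (cst r 2) (cst s 2).

(* Normalised so that, for rows i and j in different levels, [gram_defect A E i j = 0]
   exactly when the weights of i and j agree. *)
Definition row_weight : 'cV[int]_(k + (l + (p + (q + (r + s))))) :=
  col6 (signed_rsum X11 X12) (cst l (e%:Z - f%:Z) - signed_rsum X21 X22)
       (cst p (e%:Z - f%:Z) - signed_rsum Y11 Y12) (signed_rsum Y21 Y22)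
       (signed_rsum Z11 Z12 + cst r (e%:Z - f%:Z)) (- signed_rsum Z21 Z22).

Variant block_row_spec : 'rV[int]_(a + (b + (c + (d + (e + f))))) ->
    'rV[int]_(a + (b + (c + (d + (e + f))))) -> int -> int -> Type :=
  | BlockRowK (i : 'I_k) : block_row_spec
      (row6 0 (const_mx 1) 0 (const_mx 1) (row i X11) (row i X12))
      (row6 (const_mx 1) (const_mx (-1)) (const_mx 1) (const_mx (-1)) 0 0)
      0 (rsum X11 i - rsum X12 i)
  | BlockRowL (i : 'I_l) : block_row_spec
      (row6 (const_mx 1) 0 (const_mx 1) 0 (row i X21) (row i X22))
      (row6 (const_mx (-1)) (const_mx 1) (const_mx (-1)) (const_mx 1) 0 0)
      0 (e%:Z - f%:Z - (rsum X21 i - rsum X22 i))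
  | BlockRowP (i : 'I_p) : block_row_spec
      (row6 0 (const_mx 1) (row i Y11) (row i Y12) 0 (const_mx 1))
      (row6 (const_mx 1) (const_mx (-1)) 0 0 (const_mx 1) (const_mx (-1)))
      1 (e%:Z - f%:Z - (rsum Y11 i - rsum Y12 i))
  | BlockRowQ (i : 'I_q) : block_row_spec
      (row6 (const_mx 1) 0 (row i Y21) (row i Y22) (const_mx 1) 0)
      (row6 (const_mx (-1)) (const_mx 1) 0 0 (const_mx (-1)) (const_mx 1))
      1 (rsum Y21 i - rsum Y22 i)
  | BlockRowR (i : 'I_r) : block_row_spec
      (row6 (row i Z11) (row i Z12) 0 (const_mx 1) (const_mx 1) 0)
      (row6 0 0 (const_mx 1) (const_mx (-1)) (const_mx (-1)) (const_mx 1))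
      2 (rsum Z11 i - rsum Z12 i + (e%:Z - f%:Z))
  | BlockRowS (i : 'I_s) : block_row_spec
      (row6 (row i Z21) (row i Z22) (const_mx 1) 0 0 (const_mx 1))
      (row6 0 0 (const_mx (-1)) (const_mx 1) (const_mx 1) (const_mx (-1)))
      2 (- (rsum Z21 i - rsum Z22 i)).

Lemma block_rowP i :
  block_row_spec (row i A) (row i E) (block_level i 0) (row_weight i 0).
Proof.
rewrite /block_level /row_weight /col6.
case: (block6P i) => i0;
  rewrite A_def /Amx /J /col6 ?(rowKu, rowKd) row_row6 ?(row0, row_const);
  rewrite E_def /Emx /J !oppmx_const /col6 ?(rowKu, rowKd) row_row6 ?(row0, row_const);
  rewrite ?(col_mxEu, col_mxEd) /cst !mxE.
- exact: BlockRowK.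
- exact: BlockRowL.
- exact: BlockRowP.
- exact: BlockRowQ.
- exact: BlockRowR.
- exact: BlockRowS.
Qed.

Hypotheses (bal_kl : a%:Z - b%:Z + c%:Z - d%:Z = 0) (bal_pq : a%:Z - b%:Z + e%:Z - f%:Z = 0)
  (bal_rs : c%:Z - d%:Z - e%:Z + f%:Z = 0).

Lemma gram_defect_Amx_eq0 i j :
  gram_defect A E i j = 0 <->
  block_level i 0 = block_level j 0 \/ row_weight i 0 = row_weight j 0.
Proof.
rewrite gram_defectE.
case: (block_rowP i) => i0; case: (block_rowP j) => j0;
  rewrite !dot_row6 ?dot0l ?dot0r ?dot_row_const ?dot_const_row ?dot_const; lia.
Qed.

Lemma row_weight_const_cond1 :
  (exists t, row_weight = const_mx t) <->
  exists x1 x2 y1 y2 z1 z2 : int,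
    cond1_with (block_mx X11 X12 X21 X22) (block_mx Y11 Y12 Y21 Y22)
      (block_mx Z11 Z12 Z21 Z22) x1 x2 y1 y2 z1 z2.
Proof.
rewrite /cond1_with !mul_block_signs /row_weight /col6; split.
- case=> t; rewrite !col_mx_eq_const.
  case=> wX1 [/(canRL (subKr _)) wX2 [/(canRL (subKr _)) wY1 [wY2
    [/(canRL (addrK _)) wZ1 /(canRL opprK) wZ2]]]].
  exists t, (e%:Z - f%:Z - t), (e%:Z - f%:Z - t), t, (t - (e%:Z - f%:Z)), (- t).
  rewrite wX1 wX2 wY1 wY2 wZ1 wZ2.
  by do ?split; try (congr col_mx; apply/matrixP => i j; rewrite /cst !mxE); lia.
- case=> x1 [x2 [y1 [y2 [z1 [z2 [/eq_col_mx [-> ->] /eq_col_mx [-> ->]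
    /eq_col_mx [-> ->] rel [sum_xy sum_yz sum_z]]]]]]].
  exists x1; rewrite !col_mx_eq_const.
  by do !split; apply/matrixP => i j; rewrite /cst !mxE; lia.
Qed.

Lemma gram_rows_cond1 :
  (0 < k + l)%N -> (0 < p + q)%N ->
  A *m A^T = (A + E) *m (A + E)^T <->
  exists x1 x2 y1 y2 z1 z2 : int,
    cond1_with (block_mx X11 X12 X21 X22) (block_mx Y11 Y12 Y21 Y22)
      (block_mx Z11 Z12 Z21 Z22) x1 x2 y1 y2 z1 z2.
Proof.
move=> hkl hpq.
have [i0 lv0] : exists i, block_level i 0 = 0.
  by apply: (nonempty_pair_case hkl) => i;
    [exists (lshift _ i) | exists (rshift k (lshift _ i))];
    rewrite /block_level /col6 ?(col_mxEu, col_mxEd) mxE.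
have [i1 lv1] : exists i, block_level i 0 = 1.
  by apply: (nonempty_pair_case hpq) => i;
    [exists (rshift k (rshift l (lshift _ i)))
    | exists (rshift k (rshift l (rshift p (lshift _ i))))];
    rewrite /block_level /col6 ?(col_mxEu, col_mxEd) mxE.
have lv01 : block_level i0 0 <> block_level i1 0 by rewrite lv0 lv1.
rewrite gram_rows_addE -row_weight_const_cond1.
transitivity (forall i j,
  block_level i 0 = block_level j 0 \/ row_weight i 0 = row_weight j 0).
  by split=> D0 i j; apply/gram_defect_Amx_eq0.
apply: iff_trans (same_level_or_eq_const (fun i => row_weight i 0) lv01) _.
split=> -[t wt]; exists t; last by move=> i; rewrite wt mxE.
by apply/matrixP => i j; rewrite (ord1 j) wt mxE.
Qed.
End GramRows.

Section GramColumns.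
Variables (k l p q r s a b c d e f : nat).
Variables (X11 : 'M[int]_(k, e)) (X12 : 'M[int]_(k, f))
  (X21 : 'M[int]_(l, e)) (X22 : 'M[int]_(l, f))
  (Y11 : 'M[int]_(p, c)) (Y12 : 'M[int]_(p, d))
  (Y21 : 'M[int]_(q, c)) (Y22 : 'M[int]_(q, d))
  (Z11 : 'M[int]_(r, a)) (Z12 : 'M[int]_(r, b))
  (Z21 : 'M[int]_(s, a)) (Z22 : 'M[int]_(s, b)).
Let X := block_mx X11 X12 X21 X22.
Let Y := block_mx Y11 Y12 Y21 Y22.
Let Z := block_mx Z11 Z12 Z21 Z22.

Lemma cond1_trmx x1 x2 y1 y2 z1 z2 :
  k%:Z - l%:Z + r%:Z - s%:Z = 0 ->
  cond1_with Z^T Y^T X^T x1 x2 y1 y2 z1 z2 <-> cond2_with X Y Z z1 z2 y1 y2 x1 x2.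
Proof.
move=> bal_rs; rewrite /cond1_with /cond2_with.
by split=> -[hZ hY hX [[? ?] [? ?]] [? ? ?]]; do ?split=> //; lia.
Qed.

Lemma gram_cols_cond2 :
  k%:Z - l%:Z + p%:Z - q%:Z = 0 -> k%:Z - l%:Z + r%:Z - s%:Z = 0 ->
  p%:Z - q%:Z - r%:Z + s%:Z = 0 -> (0 < a + b)%N -> (0 < c + d)%N ->
  let A := Amx X11 X12 X21 X22 Y11 Y12 Y21 Y22 Z11 Z12 Z21 Z22 in
  let E := Emx k l p q r s a b c d e f in
  A^T *m A = (A + E)^T *m (A + E) <->
  exists al1 al2 be1 be2 ga1 ga2 : int, cond2_with X Y Z al1 al2 be1 be2 ga1 ga2.
Proof.
move=> bal_ab bal_cd bal_ef hab hcd A E.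
have -> : (A + E)^T *m (A + E) = (A^T + E^T) *m (A^T + E^T)^T.
  by rewrite -linearD /= trmxK.
rewrite -{2}[A]trmxK (gram_rows_cond1 (trmx_Amx _ _ _ _ _ _ _ _ _ _ _ _)
  (trmx_Emx _ _ _ _ _ _ _ _ _ _ _ _)) // -!tr_block_mx.
split=> -[x1 [x2 [y1 [y2 [z1 [z2 cond]]]]]].
  by exists z1, z2, y1, y2, x1, x2; apply/cond1_trmx.
by exists z1, z2, y1, y2, x1, x2; apply/cond1_trmx.
Qed.
End GramColumns.

Theorem theorem4p22 (k l p q r s a b c d e f : nat)
  (X11 : 'M[int]_(k, e)) (X12 : 'M[int]_(k, f))
  (X21 : 'M[int]_(l, e)) (X22 : 'M[int]_(l, f))
  (Y11 : 'M[int]_(p, c)) (Y12 : 'M[int]_(p, d))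
  (Y21 : 'M[int]_(q, c)) (Y22 : 'M[int]_(q, d))
  (Z11 : 'M[int]_(r, a)) (Z12 : 'M[int]_(r, b))
  (Z21 : 'M[int]_(s, a)) (Z22 : 'M[int]_(s, b)) :
  let E := Emx k l p q r s a b c d e f in
  let A := Amx X11 X12 X21 X22 Y11 Y12 Y21 Y22 Z11 Z12 Z21 Z22 in
  let X := block_mx X11 X12 X21 X22 in
  let Y := block_mx Y11 Y12 Y21 Y22 in
  let Z := block_mx Z11 Z12 Z21 Z22 in
  E *m ones _ = 0 ->
  (ones _)^T *m E = 0 ->
  (0 < a + b)%N -> (0 < c + d)%N -> (0 < e + f)%N ->
  (0 < k + l)%N -> (0 < p + q)%N -> (0 < r + s)%N ->
  is01 A ->
  (gram_mates A (A + E) <->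
     (exists x1 x2 y1 y2 z1 z2 : int,
        cond1_with X Y Z x1 x2 y1 y2 z1 z2) /\
     (exists al1 al2 be1 be2 ga1 ga2 : int,
        cond2_with X Y Z al1 al2 be1 be2 ga1 ga2))
  /\
  (forall x1 x2 y1 y2 z1 z2 al1 al2 be1 be2 ga1 ga2 : int,
     cond1_with X Y Z x1 x2 y1 y2 z1 z2 ->
     cond2_with X Y Z al1 al2 be1 be2 ga1 ga2 ->
     [/\ e%:Z * al1 - f%:Z * al2 = k%:Z * x1 - l%:Z * x2,
         c%:Z * be1 - d%:Z * be2 = p%:Z * y1 - q%:Z * y2
       & a%:Z * ga1 - b%:Z * ga2 = r%:Z * z1 - s%:Z * z2]).
Proof.
move=> E A X Y Z E1 E1t hab hcd hef hkl hpq hrs A01.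
have [bal_kl bal_pq bal_rs] := Emx_row_balance (erefl E) E1 hkl hpq hrs.
have Et1 : E^T *m ones _ = 0 by rewrite -[ones _]trmxK -trmx_mul E1t trmx0.
have [bal_ab bal_cd bal_ef] := Emx_row_balance (trmx_Emx _ _ _ _ _ _ _ _ _ _ _ _) Et1 hab hcd hef.
split; last first.
  move=> x1 x2 y1 y2 z1 z2 al1 al2 be1 be2 ga1 ga2 [hX hY hZ _ _] [hX' hY' hZ' _ _].
  by split; [exact: signed_rsum_duality hX hX' | exact: signed_rsum_duality hY hY'
    | exact: signed_rsum_duality hZ hZ'].
rewrite gram_mates_addE //.
- by rewrite (gram_rows_cond1 (erefl A) (erefl E)) // gram_cols_cond2.
- exact: (is01_Amx_add_Emx (erefl A) (erefl E)).
- exact: (Emx_neq0 (erefl E)).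
Qed.
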